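(* For $n\ge3$, the eigenvalues of $H(N_n)$ are $0$, $2$ and $-2$, each with multiplicity $n$.
   Context: For a digraph $X$ (finite vertex set, arcs are ordered pairs of distinct vertices), $H(X)$ has $(u,v)$-entry $1$ if $uv$ and $vu$ are arcs, $i$ if only $uv$ is an arc, $-i$ if only $vu$ is an arc, and $0$ otherwise. For $n\ge3$, the necklace digraph $N_n$ is the oriented graph with vertex set $\{v_j: j\in\mathbb{Z}_{2n}\}\cup\{w_k: k\in\mathbb{Z}_n\}$ (so $3n$ vertices) and arc set $\{v_jv_{j+1}: j\in\mathbb{Z}_{2n}\}\cup\{v_{2k}w_k,\ v_{2k+2}w_k: k\in\mathbb{Z}_n\}$, indices of $v$ taken modulo $2n$. *)

From HB Require Import structures.
From mathcomp Require Import all_boot all_order all_algebra all_field.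
Set Implicit Arguments. Unset Strict Implicit. Unset Printing Implicit Defensive.
Import Order.TTheory GRing.Theory Num.Theory.
Local Open Scope ring_scope.

Definition herm_entry (V : finType) (arc : rel V) (u v : V) : algC :=
  if arc u v && arc v u then 1
  else if arc u v then 'i
  else if arc v u then - 'i
  else 0.

Definition herm_adj (V : finType) (arc : rel V) : 'M[algC]_#|V| :=
  \matrix_(i, j) herm_entry arc (enum_val i) (enum_val j).

(* Necklace digraph N_n: vertices v_j (j in Z_{2n}) as inl j,
   w_k (k in Z_n) as inr k. Arcs v_j v_{j+1}, v_{2k} w_k, v_{2k+2} w_k. *)
Definition necklace_vertex (n : nat) : finType := ('I_(2 * n) + 'I_n)%type.

Definition necklace_arc (n : nat) : rel (necklace_vertex n) :=
  fun x y =>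
    match x, y with
    | inl j, inl j' => (nat_of_ord j' == (j.+1 %% (2 * n))%N)
    | inl j, inr k => (nat_of_ord j == ((2 * k) %% (2 * n))%N)
                      || (nat_of_ord j == ((2 * k + 2) %% (2 * n))%N)
    | _, _ => false
    end.

From HB Require Import structures.
From mathcomp Require Import all_boot all_order all_algebra all_field.
From mathcomp Require Import ring zify.
Set Implicit Arguments. Unset Strict Implicit. Unset Printing Implicit Defensive.
Import GRing.Theory Num.Theory.
Local Open Scope ring_scope.

(* The underlying graph of N_n is bipartite, one side being the even cycle
   vertices v_(2k), each of which has exactly four neighbours.  Computing
   H^2 between two even vertices, the contributions of the cycle arcs and of
   the spokes w_k cancel off the diagonal, so H^2 is 4 I on the even side:
   with H = [[0, B], [B^*, 0]] this reads B B^* = 4 I.  Hence H^3 = 4 H,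
   tr H = 0 and tr H^2 = 8 n.  So H is diagonalisable with eigenvalues among
   0, 2, -2; the trace makes the multiplicities of 2 and -2 equal, tr H^2
   makes them n, and the size 3 n of H leaves n for 0. *)

Lemma sum_delta_l (R : nzSemiRingType) (I : finType) (i : I) (F : I -> R) :
  \sum_j (j == i)%:R * F j = F i.
Proof.
by rewrite (bigD1 i) //= eqxx mul1r big1 ?addr0 // => j /negbTE ->; rewrite mul0r.
Qed.

Section KernelMatrix.
Variables (R : nzSemiRingType) (V : finType).

Definition enum_mx (h : V -> V -> R) : 'M[R]_#|V| :=
  \matrix_(i, j) h (enum_val i) (enum_val j).

Lemma sum_enum_val (F : V -> R) : \sum_(i < #|V|) F (enum_val i) = \sum_x F x.
Proof. by rewrite -(big_enum_val F). Qed.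

Lemma enum_mxM (h g : V -> V -> R) :
  enum_mx h *m enum_mx g = enum_mx (fun u v => \sum_x h u x * g x v).
Proof.
apply/matrixP => i j; rewrite !mxE -sum_enum_val.
by apply: eq_bigr => k _; rewrite !mxE.
Qed.

Lemma mxtrace_enum_mx (h : V -> V -> R) : \tr (enum_mx h) = \sum_u h u u.
Proof. by rewrite -sum_enum_val; apply: eq_bigr => i _; rewrite mxE. Qed.

End KernelMatrix.

Lemma herm_adjE (V : finType) (arc : rel V) :
  herm_adj arc = enum_mx (herm_entry arc).
Proof. by []. Qed.

Section BipartiteKernel.
Variables (R : comNzRingType) (V : finType) (h : V -> V -> R) (s : pred V) (c : R).
Hypothesis h_side_eq0 : forall u v, s u = s v -> h u v = 0.
Hypothesis h_sqr_side :
  forall u v, s u -> s v -> \sum_x h u x * h x v = c * (u == v)%:R.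

Let sqr u v := \sum_x h u x * h x v.

Lemma sqr_cross u v : s u != s v -> sqr u v = 0.
Proof.
move=> suv; apply: big1 => x _.
have [e|sxu] := eqVneq (s u) (s x); first by rewrite h_side_eq0 ?mul0r.
rewrite (@h_side_eq0 x v) ?mulr0 //.
by move: suv sxu; case: (s u) (s v) (s x) => [] [] [].
Qed.

Lemma sqr_side u v : s u || s v -> sqr u v = c * (u == v)%:R.
Proof.
move=> suv; have [/andP[su sv]|nsuv] := boolP (s u && s v); first exact: h_sqr_side.
have ne : s u != s v by move: suv nsuv; case: (s u) (s v) => [] [].
by rewrite sqr_cross // (_ : u == v = false) ?mulr0 //; apply: contraNF ne => /eqP ->.
Qed.

Lemma sum_sqr_mul u v : \sum_x sqr u x * h x v = c * h u v.
Proof.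
have [su|nsu] := boolP (s u).
  rewrite -(sum_delta_l u (fun x => c * h x v)); apply: eq_bigr => x _.
  by rewrite sqr_side ?su // eq_sym mulrCA mulrA.
have -> : \sum_x sqr u x * h x v = \sum_y h u y * sqr y v.
  rewrite /sqr; under eq_bigr do rewrite big_distrl /=.
  rewrite exchange_big /=; apply: eq_bigr => y _.
  by rewrite big_distrr /=; apply: eq_bigr => x _; rewrite mulrA.
rewrite -(sum_delta_l v (fun y => c * h u y)); apply: eq_bigr => y _.
have [sy|nsy] := boolP (s y); first by rewrite sqr_side ?sy //; ring.
by rewrite h_side_eq0 ?mul0r ?mulr0 // (negbTE nsu) (negbTE nsy).
Qed.

Lemma sum_diag_eq0 : \sum_u h u u = 0.
Proof. by apply: big1 => u _; apply: h_side_eq0. Qed.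

Lemma sum_sqr_diag : \sum_u sqr u u = c *+ (2 * #|s|).
Proof.
have on_side : \sum_(u | s u) sqr u u = c *+ #|s|.
  by rewrite -sumr_const; apply: eq_bigr => u su; rewrite sqr_side ?su // eqxx mulr1.
(* both sides count the products h u x * h x u with exactly one of u, x in s *)
have off_side : \sum_(u | ~~ s u) sqr u u = \sum_(x | s x) sqr x x.
  transitivity (\sum_(u | ~~ s u) \sum_(x | s x) h u x * h x u).
    apply: eq_bigr => u nsu; rewrite /sqr (bigID s) /= addrC big1 ?add0r // => x nsx.
    by rewrite h_side_eq0 ?mul0r // (negbTE nsu) (negbTE nsx).
  rewrite exchange_big /=; apply: eq_bigr => x sx.
  rewrite /sqr [RHS](bigID s) /= [X in X + _]big1 ?add0r => [|u su].
    by apply: eq_bigr => u _; rewrite mulrC.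
  by rewrite h_side_eq0 ?mul0r ?sx ?su.
by rewrite (bigID s) /= off_side on_side mul2n -addnn mulrnDr.
Qed.

Lemma enum_mx_cube : enum_mx h *m enum_mx h *m enum_mx h = c *: enum_mx h.
Proof. by rewrite !enum_mxM; apply/matrixP => i j; rewrite !mxE sum_sqr_mul. Qed.

Lemma mxtrace_enum_mx_eq0 : \tr (enum_mx h) = 0.
Proof. by rewrite mxtrace_enum_mx sum_diag_eq0. Qed.

Lemma mxtrace_enum_mx_sqr : \tr (enum_mx h *m enum_mx h) = c *+ (2 * #|s|).
Proof. by rewrite enum_mxM mxtrace_enum_mx sum_sqr_diag. Qed.

End BipartiteKernel.

Section Conjugation.
Variables (R : comUnitRingType) (n : nat) (P : 'M[R]_n).
Hypothesis P_unit : P \in unitmx.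

Lemma mulmx_conj (A B : 'M[R]_n) :
  (P *m A *m invmx P) *m (P *m B *m invmx P) = P *m (A *m B) *m invmx P.
Proof. by rewrite !mulmxA mulmxKV. Qed.

Lemma mxtrace_conj (A : 'M[R]_n) : \tr (P *m A *m invmx P) = \tr A.
Proof. by rewrite mxtrace_mulC mulmxA mulVmx ?mul1mx. Qed.

Lemma char_poly_conj (A : 'M[R]_n) : char_poly (P *m A *m invmx P) = char_poly A.
Proof.
rewrite /char_poly /char_poly_mx.
set Q := map_mx polyC P; set Qi := map_mx polyC (invmx P).
have QQi : Q *m Qi = 1%:M by rewrite -map_mxM mulmxV // map_mx1.
have -> : 'X%:M - map_mx polyC (P *m A *m invmx P) = Q *m ('X%:M - map_mx polyC A) *m Qi.
  rewrite !map_mxM mulmxBr mulmxBl -/Q -/Qi; congr (_ - _).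
  by rewrite scalar_mxC -mulmxA QQi mulmx1.
by rewrite !det_mulmx mulrAC -det_mulmx QQi det1 mul1r.
Qed.

End Conjugation.

Section CubeRoots.
Variables (R : numFieldType) (l : R).
Hypothesis l_neq0 : l != 0.

Lemma cube_eq_cases (x : R) :
  x ^+ 3 = l ^+ 2 * x -> [|| x == 0, x == l | x == - l].
Proof.
move=> x3; have : x * (x - l) * (x + l) = 0 by rewrite -(subrr (x ^+ 3)) {2}x3; ring.
by move/eqP; rewrite !mulf_eq0 subr_eq0 addr_eq0 orbA.
Qed.

Lemma neq_cube_roots : [&& 0 != l, 0 != - l & l != - l].
Proof.
rewrite eq_sym l_neq0 eq_sym oppr_eq0 l_neq0 /= -subr_eq0 opprK -mulr2n.
by rewrite mulrn_eq0 negb_or l_neq0.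
Qed.

Section RootFamily.
Variables (I : finType) (d : I -> R).
Hypothesis d_cube : forall i, d i ^+ 3 = l ^+ 2 * d i.

Let mult x := #|[pred i | d i == x]|.

Lemma cube_root_neg i : d i != 0 -> d i != l -> d i = - l.
Proof.
by move=> /negbTE d0 /negbTE dl; have := cube_eq_cases (d_cube i); rewrite d0 dl => /eqP.
Qed.

Lemma big_cube_roots (Q : Type) (idx : Q) (op : Monoid.com_law idx) (F : R -> Q) :
  \big[op/idx]_i F (d i) = op (\big[op/idx]_(i | d i == 0) F 0)
    (op (\big[op/idx]_(i | d i == l) F l) (\big[op/idx]_(i | d i == - l) F (- l))).
Proof.
case/and3P: neq_cube_roots => n0l n0Nl nlNl.
rewrite (bigID (fun i => d i == 0)) (bigID (fun i => d i == l) (fun i => d i != 0)) /=.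
congr (op _ (op _ _)); first by apply: eq_bigr => i /eqP ->.
  apply: eq_big => [i|i /andP[_ /eqP ->]] //.
  by case: (d i =P 0) => [->|]; rewrite ?(negbTE n0l).
apply: eq_big => [i|i /andP[d0 dl]]; last by rewrite cube_root_neg.
apply/andP/eqP => [[]|->]; first exact: cube_root_neg.
by rewrite eq_sym n0Nl eq_sym nlNl.
Qed.

Lemma card_cube_roots : #|I| = (mult 0%R + (mult l + mult (- l)))%N.
Proof. by rewrite -sum1_card (big_cube_roots addn (fun=> 1%N)) !sum1_card. Qed.

Lemma sumr_cube_roots : \sum_i d i = l *+ mult l - l *+ mult (- l).
Proof. by rewrite (big_cube_roots _ id) /= !sumr_const mul0rn add0r mulNrn. Qed.

Lemma sumr_sqr_cube_roots : \sum_i d i ^+ 2 = l ^+ 2 *+ (mult l + mult (- l)).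
Proof.
rewrite (big_cube_roots _ (fun x => x ^+ 2)) /= !sumr_const.
by rewrite expr0n mul0rn add0r sqrrN mulrnDr.
Qed.

Lemma prod_XsubC_cube_roots : \prod_i ('X - (d i)%:P)
  = 'X ^+ mult 0 * (('X - l%:P) ^+ mult l * ('X + l%:P) ^+ mult (- l)).
Proof.
by rewrite (big_cube_roots _ (fun x => 'X - x%:P)) /= !prodr_const subr0 polyCN opprK.
Qed.

Lemma mult_cube_roots k : \sum_i d i = 0 -> \sum_i d i ^+ 2 = l ^+ 2 *+ (2 * k) ->
  #|I| = (3 * k)%N -> [/\ mult 0 = k, mult l = k & mult (- l) = k].
Proof.
rewrite sumr_cube_roots sumr_sqr_cube_roots card_cube_roots => /eqP.
rewrite subr_eq0 => /eqP/(mulrIn l_neq0) eq_pm /(mulrIn (expf_neq0 2 l_neq0)).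
by move=> ? ?; split; lia.
Qed.

End RootFamily.

Lemma diagonalizable_cube m (A : 'M[R]_m.+1) :
  A *m A *m A = l ^+ 2 *: A -> diagonalizable A.
Proof.
move=> A3; apply/diagonalizableP; exists [:: 0; l; - l].
  by case/and3P: neq_cube_roots => n0l n0Nl nlNl; rewrite /= !inE !negb_or n0l n0Nl nlNl.
have -> : \prod_(x <- [:: 0; l; - l]) ('X - x%:P) = 'X ^+ 3 - (l ^+ 2)%:P * 'X.
  by rewrite !big_cons big_nil polyCN polyC0 expr2 polyCM; ring.
apply: mxminpoly_min.
rewrite rmorphB [X in _ - X]rmorphM rmorphXn /= horner_mx_C horner_mx_X.
by rewrite -mulmxE mul_scalar_mx -A3 !exprS expr0 mulr1 -!mulmxE mulmxA subrr.
Qed.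

Lemma char_poly_cube m k (A : 'M[R]_m) :
  A *m A *m A = l ^+ 2 *: A -> \tr A = 0 -> \tr (A *m A) = l ^+ 2 *+ (2 * k) ->
  m = (3 * k)%N ->
  char_poly A = 'X ^+ k * ('X - l%:P) ^+ k * ('X + l%:P) ^+ k.
Proof.
case: m A => [|m] A A3 trA trA2 mk.
  have -> : k = 0%N by lia.
  by rewrite /char_poly det_mx00 !expr0 !mul1r.
have [P Pu /diagonalizable_forPex [e /(simmxRL Pu) eA]] := diagonalizable_cube A3.
have e_cube i : e 0 i ^+ 3 = l ^+ 2 * e 0 i.
  have /matrixP/(_ i i) : diag_mx e *m diag_mx e *m diag_mx e = l ^+ 2 *: diag_mx e.
    by rewrite eA !mulmx_conj // A3 -scalemxAr -scalemxAl.
  by rewrite !mulmx_diag !mxE eqxx !mulr1n => <-; rewrite !exprS expr0 mulr1 mulrA.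
have [||| m0 ml mNl] := mult_cube_roots e_cube (k := k).
- by move: trA; rewrite -(mxtrace_conj Pu) -eA mxtrace_diag.
- rewrite -trA2 -(mxtrace_conj Pu) -mulmx_conj // -eA mulmx_diag mxtrace_diag.
  by apply: eq_bigr => i _; rewrite mxE expr2.
- by rewrite card_ord.
rewrite -(char_poly_conj Pu) -eA char_poly_trig ?diag_mx_is_trig //.
under eq_bigr do rewrite mxE eqxx mulr1n.
by rewrite prod_XsubC_cube_roots // m0 ml mNl mulrA.
Qed.

End CubeRoots.

Lemma herm_entry_oriented (V : finType) (arc : rel V) u v :
  ~~ (arc u v && arc v u) -> herm_entry arc u v = 'i * ((arc u v)%:R - (arc v u)%:R).
Proof.
rewrite /herm_entry; case: (arc u v); case: (arc v u) => //= _.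
- by rewrite subr0 mulr1.
- by rewrite sub0r mulrN mulr1.
- by rewrite subrr mulr0.
Qed.

Lemma val_ordS m (a : 'I_m) : ordS a = (if a.+1 == m then 0 else a.+1)%N :> nat.
Proof.
rewrite /=; case: eqP => [->|ne]; first by rewrite modnn.
by rewrite modn_small //; have := ltn_ord a; lia.
Qed.

Lemma ordS_neq m (a : 'I_m) : (1 < m)%N -> ordS a != a.
Proof.
by move=> m1; apply/eqP => /(congr1 (@nat_of_ord m)); rewrite val_ordS; case: eqP; lia.
Qed.

Lemma ordS2_neq m (a : 'I_m) : (2 < m)%N -> ordS (ordS a) != a.
Proof.
move=> m2; apply/eqP => /(congr1 (@nat_of_ord m)); rewrite !val_ordS.
by have := ltn_ord a; case: (a.+1 =P m) => ?; case: eqP => ?; lia.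
Qed.

Fact ord_double_subproof n (k : 'I_n) : (2 * k < 2 * n)%N.
Proof. by rewrite ltn_pmul2l. Qed.

Definition ord_double n (k : 'I_n) : 'I_(2 * n) := Ordinal (ord_double_subproof k).

Lemma ord_double_inj n : injective (@ord_double n).
Proof. by move=> k k' /(congr1 val) /= /eqP; rewrite eqn_pmul2l // => /eqP /val_inj. Qed.

Lemma val_ord_double_ordS n (k : 'I_n) :
  val (ord_double (ordS k)) = ((2 * k + 2) %% (2 * n))%N.
Proof. by rewrite /= muln_modr mulnS addnC. Qed.

Lemma ordS2_double n (k : 'I_n) : ordS (ordS (ord_double k)) = ord_double (ordS k).
Proof.
apply: val_inj; rewrite val_ord_double_ordS /= (@modn_small (2 * k).+1); last first.
  by have := ltn_ord k; lia.
by rewrite addn2.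
Qed.

Lemma odd_ordS n (a : 'I_(2 * n)) : odd (ordS a) = ~~ odd a.
Proof. by rewrite /= odd_mod // oddM. Qed.

Lemma even_ord_double n (a : 'I_(2 * n)) : ~~ odd a -> exists k, a = ord_double k.
Proof.
move=> even_a; have a2 : a = (2 * a./2)%N :> nat.
  by rewrite -[LHS]odd_double_half (negbTE even_a) -mul2n.
have lt_half : (a./2 < n)%N by have := ltn_ord a; lia.
by exists (Ordinal lt_half); apply: val_inj.
Qed.

Lemma necklace_arc_inl_inr n (a : 'I_(2 * n)) (k : 'I_n) :
  necklace_arc (inl a) (inr k) = (a == ord_double k) || (a == ord_double (ordS k)).
Proof.
rewrite /necklace_arc (modn_small (ord_double_subproof k)).
by rewrite -val_ord_double_ordS.
Qed.

Definition necklace_even n (x : necklace_vertex n) : bool :=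
  if x is inl a then ~~ odd a else false.

Lemma necklace_arc_parity n (x y : necklace_vertex n) :
  necklace_arc x y -> necklace_even x != necklace_even y.
Proof.
case: x => [a|k]; case: y => [b|k'] //.
  by move=> /eqP /= ->; rewrite odd_mod ?oddM //=; case: (odd a).
by rewrite necklace_arc_inl_inr => /orP[] /eqP -> /=; rewrite oddM.
Qed.

Lemma necklace_arc_inl n (a b : 'I_(2 * n)) :
  necklace_arc (inl a) (inl b) = (b == ordS a).
Proof. by []. Qed.

Lemma necklace_oriented n (x y : necklace_vertex n) : (1 < n)%N ->
  ~~ (necklace_arc x y && necklace_arc y x).
Proof.
move=> n1; case: x => [a|k]; case: y => [b|k'] //; last by rewrite /= andbF.
rewrite !necklace_arc_inl; apply/andP => -[/eqP -> /eqP /esym /eqP].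
by apply/negP/ordS2_neq; lia.
Qed.

Lemma necklace_hermE n (x y : necklace_vertex n) : (1 < n)%N ->
  herm_entry (@necklace_arc n) x y
  = 'i * ((necklace_arc x y)%:R - (necklace_arc y x)%:R).
Proof. by move=> n1; rewrite herm_entry_oriented ?necklace_oriented. Qed.

Lemma necklace_herm_parity n (x y : necklace_vertex n) : (1 < n)%N ->
  necklace_even x = necklace_even y -> herm_entry (@necklace_arc n) x y = 0.
Proof.
move=> n1 exy; rewrite necklace_hermE //.
have no_arc u v : necklace_even u = necklace_even v -> necklace_arc u v = false.
  by move=> euv; apply: contra_eqF euv => /necklace_arc_parity.
by rewrite !no_arc // subrr mulr0.
Qed.

Lemma card_necklace_even n : #|necklace_even (n := n)| = n.
Proof.
pose v_even (k : 'I_n) : necklace_vertex n := inl (ord_double k).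
have inj_v_even : injective v_even.
  by move=> k k' [] e; apply: ord_double_inj; apply: val_inj.
rewrite -[RHS]card_ord -(card_codom inj_v_even); apply: eq_card => -[a|k].
  apply/idP/codomP => [/even_ord_double [k ->]|[k ->]]; first by exists k.
  by rewrite unfold_in /= oddM.
by apply/esym/codomP => -[].
Qed.

Lemma sum_delta_ordS (R : nzSemiRingType) m (a b : 'I_m) :
  \sum_j (a == ordS j)%:R * (b == ordS j)%:R = (a == b)%:R :> R.
Proof.
pose F j := (a == j)%:R * (b == j)%:R :> R.
rewrite -(reindex_inj (P := xpredT) (F := F) (@ordS_inj m)) /F /=.
rewrite -[RHS](sum_delta_l a (fun j => (j == b)%:R)).
by apply: eq_bigr => j _; rewrite eq_sym [b == j]eq_sym.
Qed.

Section NecklaceSquare.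
Variables (n : nat) (t t' : 'I_n).
Hypothesis n_gt1 : (1 < n)%N.

Local Notation h := (herm_entry (@necklace_arc n)).
Local Notation e := (ord_double t).
Local Notation e' := (ord_double t').

Lemma necklace_cycle_sqr :
  \sum_b h (inl e) (inl b) * h (inl b) (inl e')
  = 2 * (t == t')%:R - (t' == ordS t)%:R - (t == ordS t')%:R.
Proof.
transitivity (- (\sum_b (b == ordS e)%:R * (e' == ordS b)%:R
              - \sum_b (b == ordS e)%:R * (b == ordS e')%:R
              - \sum_b (e == ordS b)%:R * (e' == ordS b)%:R
              + \sum_b (b == ordS e')%:R * (e == ordS b)%:R) : algC).
  rewrite -!sumrB -big_split -sumrN /=; apply: eq_bigr => b _.
  rewrite !necklace_hermE // !necklace_arc_inl.
  transitivity ('i * 'i * (((b == ordS e)%:R - (e == ordS b)%:R) *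
                 ((e' == ordS b)%:R - (b == ordS e')%:R)) : algC); first by ring.
  by rewrite -expr2 sqrCi; ring.
rewrite !sum_delta_l sum_delta_ordS !ordS2_double (inj_eq (@ordS_inj _)).
by rewrite !(inj_eq (@ord_double_inj n)); ring.
Qed.

Lemma necklace_spoke_arc (s k : 'I_n) :
  (necklace_arc (inl (ord_double s)) (inr k))%:R = (k == s)%:R + (s == ordS k)%:R :> algC.
Proof.
rewrite necklace_arc_inl_inr !(inj_eq (@ord_double_inj n)) [s == k]eq_sym.
by case: (k =P s) => [->|_] /=; rewrite ?add0r // eq_sym (negbTE (ordS_neq s n_gt1)) addr0.
Qed.

Lemma necklace_spoke_sqr :
  \sum_k h (inl e) (inr k) * h (inr k) (inl e')
  = 2 * (t == t')%:R + (t' == ordS t)%:R + (t == ordS t')%:R.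
Proof.
transitivity (\sum_(k < n) ((k == t)%:R + (t == ordS k)%:R)
                          * ((k == t')%:R + (t' == ordS k)%:R) : algC).
  apply: eq_bigr => k _; rewrite !necklace_hermE // !necklace_spoke_arc /= subr0 sub0r.
  set a := _ + _; set b := _ + _.
  transitivity (- ('i * 'i) * (a * b)); first by ring.
  by rewrite -expr2 sqrCi opprK mul1r.
under eq_bigr do rewrite mulrDl !mulrDr [(t == ordS _)%:R * _]mulrC.
by rewrite !big_split /= !sum_delta_l sum_delta_ordS; ring.
Qed.

Lemma necklace_herm_sqr_even :
  \sum_x h (inl e) x * h x (inl e') = 4 * (t == t')%:R.
Proof. by rewrite big_sumType /= necklace_cycle_sqr necklace_spoke_sqr; ring. Qed.

End NecklaceSquare.

Lemma necklace_herm_sqr_side n (u v : necklace_vertex n) : (1 < n)%N ->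
  necklace_even u -> necklace_even v ->
  \sum_x herm_entry (@necklace_arc n) u x * herm_entry (@necklace_arc n) x v
  = 2 ^+ 2 * (u == v)%:R.
Proof.
move=> n1; case: u => [a|//]; case: v => [b|//] /=.
move=> /even_ord_double [t ->] /even_ord_double [t' ->].
by rewrite necklace_herm_sqr_even // (inj_eq inl_inj) (inj_eq (@ord_double_inj n)); ring.
Qed.

Theorem corollary7p2 (n : nat) (hn : (3 <= n)%N) :
  char_poly (herm_adj (@necklace_arc n))
  = 'X ^+ n * ('X - 2%:P) ^+ n * ('X + 2%:P) ^+ n :> {poly algC}.
Proof.
have n1 : (1 < n)%N by apply: ltnW.
have bip := necklace_herm_parity n1; have sqr := necklace_herm_sqr_side n1.
rewrite herm_adjE; apply: char_poly_cube.
- by rewrite pnatr_eq0.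
- exact: enum_mx_cube bip sqr.
- exact: mxtrace_enum_mx_eq0 bip.
- by rewrite (mxtrace_enum_mx_sqr bip sqr) card_necklace_even.
- by rewrite card_sum !card_ord; lia.
Qed.
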